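(* Let $A$ be an $n\times n$ Bott matrix, $M=M(A)$ and $\Gamma=\pi_1(M)$. Then $$H_1(\Gamma)\cong\mathbb{F}_2^{\,n-b_1}\oplus\mathbb{Z}^{b_1},$$ where $b_1$ is the first Betti number of $M$.
   Context: A Bott matrix is a strictly upper triangular matrix $A=[a_{ij}]\in\mathbb{F}_2^{n\times n}$. The group $C_2^n=\langle c_1,\dots,c_n\rangle$ acts freely on the torus $T^n=(S^1)^n\subset\mathbb{C}^n$ by $$c_i\cdot(z_1,\dots,z_n)=(z_1,\dots,z_{i-1},-z_i,c_{i,i+1}(z_{i+1}),\dots,c_{i,n}(z_n)),$$ where $c_{i,j}(z)=z$ if $a_{ij}=0$ and $c_{i,j}(z)=\bar z$ if $a_{ij}=1$. The real Bott manifold is $M(A)=T^n/C_2^n$. *)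

From HB Require Import structures.
From mathcomp Require Import all_boot all_order all_algebra.
Set Implicit Arguments. Unset Strict Implicit. Unset Printing Implicit Defensive.
Import Order.TTheory GRing.Theory Num.Theory.
Local Open Scope ring_scope.

Definition is_bott (n : nat) (A : 'M['F_2]_n) : Prop :=
  forall i j : 'I_n, (j <= i)%N -> A i j = 0.

(** Affine maps of Q^n of the form x |-> (sgn(s_i) x_i + w_i)_i
    (diagonal sign matrix plus translation).  Pair (s, w). *)
Definition aff (n : nat) := ({ffun 'I_n -> bool} * {ffun 'I_n -> rat})%type.

Definition sgn (b : bool) : rat := if b then -1 else 1.

Definition aff_app n (g : aff n) (x : 'I_n -> rat) : 'I_n -> rat :=
  fun i => sgn (g.1 i) * x i + g.2 i.

Definition aff_mul n (g h : aff n) : aff n :=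
  ([ffun i => g.1 i (+) h.1 i], [ffun i => sgn (g.1 i) * h.2 i + g.2 i]).
Definition aff_one n : aff n := ([ffun _ => false], [ffun _ => 0]).
Definition aff_inv n (g : aff n) : aff n :=
  (g.1, [ffun i => - (sgn (g.1 i) * g.2 i)]).

(** Lift to R^n (coordinates z_j = exp(2 pi i x_j)) of the generator c_i:
    x_i |-> x_i + 1/2, x_j |-> -x_j for j > i with a_ij = 1, other coords fixed. *)
Definition bott_gen n (A : 'M['F_2]_n) (i : 'I_n) : aff n :=
  ([ffun j : 'I_n => (i < j)%N && (A i j == 1)], [ffun j : 'I_n => if j == i then 1 / 2 else 0]).

Definition transl n (j : 'I_n) : aff n :=
  ([ffun _ => false], [ffun k : 'I_n => if k == j then 1 else 0]).

(** Gamma = pi_1(M(A)): group of all lifts to R^n of the elements of C_2^n,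
    i.e. the group generated by the lifted generators and the integer translations. *)
Inductive Gamma n (A : 'M['F_2]_n) : aff n -> Prop :=
| Gamma_gen i : Gamma A (bott_gen A i)
| Gamma_tr j : Gamma A (transl j)
| Gamma_one : Gamma A (aff_one n)
| Gamma_mul g h : Gamma A g -> Gamma A h -> Gamma A (aff_mul g h)
| Gamma_inv g : Gamma A g -> Gamma A (aff_inv g).

Inductive commGamma n (A : 'M['F_2]_n) : aff n -> Prop :=
| comm_gen g h : Gamma A g -> Gamma A h ->
    commGamma A (aff_mul (aff_mul (aff_inv g) (aff_inv h)) (aff_mul g h))
| comm_one : commGamma A (aff_one n)
| comm_mul g h : commGamma A g -> commGamma A h -> commGamma A (aff_mul g h)
| comm_inv g : commGamma A g -> commGamma A (aff_inv g).

Definition homQ n (A : 'M['F_2]_n) (f : aff n -> rat) : Prop :=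
  forall g h, Gamma A g -> Gamma A h -> f (aff_mul g h) = f g + f h.

Definition homQ_indep n (A : 'M['F_2]_n) m (f : 'I_m -> aff n -> rat) : Prop :=
  forall c : 'I_m -> rat,
    (forall g, Gamma A g -> \sum_(k < m) c k * f k g = 0) -> forall k, c k = 0.

(** b = first Betti number of M(A) = dim_Q H^1(M;Q) = dim_Q Hom(Gamma, Q)
    (M(A) is aspherical with fundamental group Gamma). *)
Definition betti1 n (A : 'M['F_2]_n) (b : nat) : Prop :=
  (exists f : 'I_b -> aff n -> rat, (forall k, homQ A (f k)) /\ homQ_indep A f) /\
  (forall m (f : 'I_m -> aff n -> rat),
      (forall k, homQ A (f k)) -> homQ_indep A f -> (m <= b)%N).

(* Every element of Gamma acts as x |-> (+-x_i + w_i)_i with 2w integral, and its sign at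
   k is the sum of the parities of 2w_i over the i < k with a_ik = 1.  So the sign is +
   at every zero column j of A, and g |-> ((2w_j mod 2) at the nonzero columns, (2w_j)
   at the zero columns) is a homomorphism onto F_2^(n-z) x Z^z, z the number of zero
   columns.  Its kernel consists of the integer translations supported on the nonzero
   columns, which are commutators: if i < j and a_ij = 1, the commutator of c_i and c_j
   is the unit translation t_j.  This relation and c_j^2 = t_j show that a homomorphism
   to Q is determined by its values at the c_j with j a zero column, while the
   coordinates w_j at the zero columns are independent such homomorphisms: b_1 = z. *)

From HB Require Import structures.
From mathcomp Require Import all_boot all_order all_algebra.
From mathcomp Require Import ring lra.
Import Order.TTheory GRing.Theory Num.Theory.
Local Open Scope ring_scope.
Set Implicit Arguments. Unset Strict Implicit. Unset Printing Implicit Defensive.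

Definition zmod_closed_prop (V : zmodType) (S : V -> Prop) : Prop :=
  [/\ S 0, forall x y, S x -> S y -> S (x + y) & forall x, S x -> S (- x)].

Section ZmodClosedProp.

Variables (V : zmodType) (S : V -> Prop).
Hypothesis closedS : zmod_closed_prop S.

Lemma zmod_closed_mulz x z : S x -> S (x *~ z).
Proof.
case: closedS => S0 SD SN Sx; elim/int_rec: z => [|m IH|m IH]; first by rewrite mulr0z.
- by rewrite -addn1 PoszD mulrzDr mulr1z; apply: SD.
- by rewrite -addn1 PoszD opprD mulrzDr mulrN1z; apply: SD => //; apply: SN.
Qed.

Lemma zmod_closed_sum (I : finType) (F : I -> V) :
  (forall i, S (F i)) -> S (\sum_i F i).
Proof. by case: closedS => S0 SD _ SF; apply: big_ind. Qed.

End ZmodClosedProp.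

Lemma zmod_closed_row (R : pzRingType) m (S : 'rV[R]_m -> Prop) (u : 'rV[R]_m) :
  zmod_closed_prop S -> (forall k, exists z : int, u 0 k = z%:~R) ->
  (forall k, u 0 k != 0 -> S 'e_k) -> S u.
Proof.
move=> closedS uZ Se; rewrite (row_sum_delta u); apply: zmod_closed_sum => // k.
have [->|uk0] := eqVneq (u 0 k) 0; first by rewrite scale0r; case: closedS.
have [z uz] := uZ k; rewrite uz scaler_int.
by apply: zmod_closed_mulz => //; apply: Se.
Qed.

Lemma zmod_closed_pairl (V W : zmodType) (S : V * W -> Prop) :
  zmod_closed_prop S -> zmod_closed_prop (fun x => S (x, 0)).
Proof.
case=> S0 SD SN; split=> // [x y Sx Sy|x Sx].
  by rewrite -[X in (_, X)](addr0 (0 : W)); apply: SD Sx Sy.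
by rewrite -[X in (_, X)](oppr0 W); apply: SN Sx.
Qed.

Lemma zmod_closed_pairr (V W : zmodType) (S : V * W -> Prop) :
  zmod_closed_prop S -> zmod_closed_prop (fun y => S (0, y)).
Proof.
case=> S0 SD SN; split=> // [x y Sx Sy|x Sx].
  by rewrite -[X in (X, _)](addr0 (0 : V)); apply: SD Sx Sy.
by rewrite -[X in (X, _)](oppr0 V); apply: SN Sx.
Qed.

Section AffineGroup.

Variable n : nat.
Implicit Types (g h : aff n) (u v : 'rV[rat]_n).

Lemma aff_ext g h : g.1 =1 h.1 -> g.2 =1 h.2 -> g = h.
Proof. by case: g h => [s w] [s' w'] /= eq1 eq2; congr pair; apply/ffunP. Qed.

Lemma aff_mul1g g : aff_mul (aff_one n) g = g.
Proof. by apply: aff_ext => i; rewrite !ffunE /= ?mul1r ?addr0. Qed.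

Lemma aff_mulVg g : aff_mul (aff_inv g) g = aff_one n.
Proof. by apply: aff_ext => i; rewrite !ffunE /= ?addbb ?addrN. Qed.

Definition aff_tr u : aff n := ([ffun=> false], [ffun i => u 0 i]).

Lemma aff_tr0 : aff_tr 0 = aff_one n.
Proof. by apply: aff_ext => i; rewrite !ffunE ?mxE. Qed.

Lemma aff_trD u v : aff_mul (aff_tr u) (aff_tr v) = aff_tr (u + v).
Proof. by apply: aff_ext => i; rewrite !ffunE ?mxE //= mul1r addrC. Qed.

Lemma aff_trN u : aff_inv (aff_tr u) = aff_tr (- u).
Proof. by apply: aff_ext => i; rewrite !ffunE ?mxE //= mul1r. Qed.

Lemma transl_tr j : transl j = aff_tr 'e_j.
Proof. by apply: aff_ext => k; rewrite !ffunE // mxE eq_sym; case: (j == k). Qed.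

End AffineGroup.

Section BottGroup.

Variables (n : nat) (A : 'M['F_2]_n).
Implicit Types (g h : aff n) (i j : 'I_n).

Lemma bott_gen_sqr j : aff_mul (bott_gen A j) (bott_gen A j) = transl j.
Proof.
apply: aff_ext => k; rewrite !ffunE /= ?addbb //.
by have [->|_] := eqVneq k j; rewrite ?ltnn /sgn /=; lra.
Qed.

Lemma bott_gen_comm i j : (i < j)%N -> A i j = 1 ->
  aff_mul (aff_mul (aff_inv (bott_gen A i)) (aff_inv (bott_gen A j)))
          (aff_mul (bott_gen A i) (bott_gen A j)) = transl j.
Proof.
move=> lt_ij Aij; have lt_ji : (j < i)%N = false by apply/negbTE; rewrite -leqNgt ltnW.
apply: aff_ext => k; rewrite !ffunE /=.
  by case: ((i < k)%N && _); case: ((j < k)%N && _).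
have [->|nkj] := eqVneq k j; first by rewrite lt_ij Aij ltnn /sgn /=; lra.
have [->|nki] := eqVneq k i; first by rewrite lt_ji ltnn /sgn /=; lra.
by rewrite /sgn; case: ((i < k)%N && _); case: ((j < k)%N && _); rewrite /=; lra.
Qed.

Lemma commGamma_Gamma g : commGamma A g -> Gamma A g.
Proof. by elim=> *; repeat constructor. Qed.

Section Homomorphisms.

Variables (V : zmodType) (f : aff n -> V).
Hypothesis hom_f : forall g h, Gamma A g -> Gamma A h -> f (aff_mul g h) = f g + f h.

Lemma hom1 : f (aff_one n) = 0.
Proof.
have := hom_f (Gamma_one A) (Gamma_one A); rewrite aff_mul1g => f11.
by apply: (addrI (f (aff_one n))); rewrite addr0 -f11.
Qed.

Lemma homV g : Gamma A g -> f (aff_inv g) = - f g.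
Proof.
move=> Gg; have := hom_f (Gamma_inv Gg) Gg; rewrite aff_mulVg hom1.
by move/eqP; rewrite eq_sym addr_eq0 => /eqP.
Qed.

Lemma hom_comm g : commGamma A g -> f g = 0.
Proof.
elim=> [g1 h1 G1 H1||g1 h1 C1 E1 C2 E2|g1 C1 E1].
- have [Gi1 Hi1] := (Gamma_inv G1, Gamma_inv H1).
  rewrite !hom_f ?homV //; try exact: Gamma_mul.
  by rewrite -opprD addNr.
- exact: hom1.
- by rewrite hom_f ?E1 ?E2 ?addr0 //; apply: commGamma_Gamma.
- by rewrite homV ?E1 ?oppr0 //; apply: commGamma_Gamma.
Qed.

Lemma hom_eq0 : (forall i, f (bott_gen A i) = 0) -> forall g, Gamma A g -> f g = 0.
Proof.
move=> f_gen g; elim=> [i|j||g1 h1 G1 E1 H1 E2|g1 G1 E1].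
- exact: f_gen.
- by rewrite -bott_gen_sqr hom_f ?f_gen ?addr0 //; apply: Gamma_gen.
- exact: hom1.
- by rewrite hom_f // E1 E2 addr0.
- by rewrite homV // E1 oppr0.
Qed.

Lemma hom_image_closed : zmod_closed_prop (fun y => exists2 g, Gamma A g & f g = y).
Proof.
split.
- by exists (aff_one n); [exact: Gamma_one | exact: hom1].
- by move=> _ _ [g Gg <-] [h Gh <-]; exists (aff_mul g h); [exact: Gamma_mul | exact: hom_f].
- by move=> _ [g Gg <-]; exists (aff_inv g); [exact: Gamma_inv | exact: homV].
Qed.

End Homomorphisms.

End BottGroup.

(* [numq] makes [coord2] total; it is the integer [2 w_i] only when [2 w_i] is
   integral, which [bott_shape] asserts. *)
Definition coord2 n (g : aff n) (i : 'I_n) : int := numq (2 * g.2 i).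
Definition parity n (g : aff n) (i : 'I_n) : 'F_2 := (coord2 g i)%:~R.
Definition sgnz (b : bool) : int := if b then -1 else 1.

Lemma sgnzE b : (sgnz b)%:~R = sgn b :> rat.
Proof. by case: b. Qed.

Lemma F2_oppr (x : 'F_2) : - x = x.
Proof. by case: x => [[|[|//]] ?]; apply/val_inj. Qed.

Lemma F2_sgnz b (z : int) : (sgnz b * z)%:~R = z%:~R :> 'F_2.
Proof. by case: b; rewrite /sgnz ?mulN1r ?mul1r // intrN F2_oppr. Qed.

Lemma F2_eq1D (x y : 'F_2) : (x + y == 1) = (x == 1) (+) (y == 1).
Proof. by case: x => [[|[|//]] ?]; case: y => [[|[|//]] ?]. Qed.

Lemma F2_intr_eq0 (k : int) : k%:~R = 0 :> 'F_2 -> exists y : int, k = 2 * y.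
Proof.
move/eqP; rewrite -(dvdz_pcharf (pchar_Fp (isT : prime 2))) => /dvdzP [y ->].
by exists y; rewrite mulrC.
Qed.

Lemma coord2E n (g : aff n) i (z : int) : 2 * g.2 i = z%:~R -> coord2 g i = z.
Proof. by rewrite /coord2 => ->; rewrite numq_int. Qed.

Section BottShape.

Variables (n : nat) (A : 'M['F_2]_n).
Implicit Types (g h : aff n) (i j : 'I_n).

Record bott_shape g : Prop := BottShape {
  coord2K : forall i, (coord2 g i)%:~R = 2 * g.2 i;
  sign_parity : forall k,
    g.1 k = (\sum_(i < n | (i < k)%N && (A i k == 1)) parity g i == 1) }.

Lemma coord2_mul g h i : bott_shape g -> bott_shape h ->
  coord2 (aff_mul g h) i = sgnz (g.1 i) * coord2 h i + coord2 g i.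
Proof.
move=> [Kg _] [Kh _]; apply: coord2E.
by rewrite ffunE intrD intrM sgnzE Kg Kh; ring.
Qed.

Lemma coord2_inv g i : bott_shape g ->
  coord2 (aff_inv g) i = - (sgnz (g.1 i) * coord2 g i).
Proof. by move=> [Kg _]; apply: coord2E; rewrite ffunE intrN intrM sgnzE Kg; ring. Qed.

Lemma parity_mul g h i : bott_shape g -> bott_shape h ->
  parity (aff_mul g h) i = parity g i + parity h i.
Proof. by move=> Sg Sh; rewrite /parity coord2_mul // intrD F2_sgnz addrC. Qed.

Lemma parity_inv g i : bott_shape g -> parity (aff_inv g) i = parity g i.
Proof. by move=> Sg; rewrite /parity coord2_inv // intrN F2_oppr F2_sgnz. Qed.

Lemma bott_shape_mul g h : bott_shape g -> bott_shape h -> bott_shape (aff_mul g h).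
Proof.
move=> Sg Sh; split=> [i|k].
  by rewrite coord2_mul // intrD intrM sgnzE !coord2K // ffunE; ring.
rewrite ffunE !sign_parity // -F2_eq1D -big_split.
by congr (_ == 1); apply: eq_bigr => i _; rewrite parity_mul.
Qed.

Lemma bott_shape_inv g : bott_shape g -> bott_shape (aff_inv g).
Proof.
move=> Sg; split=> [i|k]; first by rewrite coord2_inv // intrN intrM sgnzE coord2K // ffunE; ring.
by rewrite /= sign_parity //; under eq_bigr do rewrite parity_inv //.
Qed.

Lemma bott_shape_int_transl g : g.1 =1 (fun=> false) ->
  (forall i, exists z : int, g.2 i = z%:~R) -> bott_shape g.
Proof.
move=> g1F g2Z.
have coord2_even i : exists z : int, coord2 g i = 2 * z.
  by have [z gz] := g2Z i; exists z; apply: coord2E; rewrite gz intrM.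
split=> [i|k]; first by have [z gz] := g2Z i; rewrite (coord2E (z := 2 * z)) gz ?intrM.
rewrite g1F big1 // => i _; rewrite /parity; have [z ->] := coord2_even i.
by rewrite intrM (_ : 2%:~R = 0 :> 'F_2) ?mul0r //; apply/val_inj.
Qed.

Lemma coord2_gen j i : coord2 (bott_gen A j) i = (i == j)%:R.
Proof. by apply: coord2E; rewrite ffunE; case: (i == j); rewrite ?mulr0 // mulrC mulfVK. Qed.

Lemma parity_gen j i : parity (bott_gen A j) i = (i == j)%:R.
Proof. by rewrite /parity coord2_gen; case: (i == j). Qed.

Lemma bott_shape_gen j : bott_shape (bott_gen A j).
Proof.
split=> [i|k]; first by rewrite coord2_gen ffunE; case: (i == j); rewrite ?mulr0 // mulrC mulfVK.
rewrite ffunE; under eq_bigr do rewrite parity_gen.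
case Pj: ((j < k)%N && (A j k == 1)).
  by rewrite (bigD1 j) //= eqxx big1 ?addr0 // => i /andP [_ /negbTE ->].
rewrite big1 // => i Pi; have /negbTE -> // : i != j.
by apply: contraFneq Pj => <-.
Qed.

Lemma Gamma_bott_shape g : Gamma A g -> bott_shape g.
Proof.
elim=> [i|j||g1 h1 _ S1 _ S2|g1 _ S1].
- exact: bott_shape_gen.
- by apply: bott_shape_int_transl => [i|i]; rewrite ffunE //; case: (i == j); [exists 1 | exists 0].
- by apply: bott_shape_int_transl => i; rewrite ffunE //; exists 0.
- exact: bott_shape_mul.
- exact: bott_shape_inv.
Qed.

End BottShape.

Section ZeroColumns.

Variables (n : nat) (A : 'M['F_2]_n).
Implicit Types (g h : aff n) (i j : 'I_n).

Definition zero_cols : {set 'I_n} :=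
  [set j : 'I_n | [forall i : 'I_n, ~~ ((i < j)%N && (A i j == 1))]].

Local Notation z := #|zero_cols|.

Lemma sign_zero_col g j : Gamma A g -> j \in zero_cols -> g.1 j = false.
Proof.
move=> /Gamma_bott_shape Sg; rewrite inE => /forallP zj.
by rewrite (sign_parity Sg) big_pred0 // => i; apply/negbTE/zj.
Qed.

Lemma transl_comm j : j \notin zero_cols -> commGamma A (transl j).
Proof.
rewrite inE => /forallPn [i]; rewrite negbK => /andP [lt_ij /eqP Aij].
rewrite -(bott_gen_comm lt_ij Aij); apply: comm_gen; exact: Gamma_gen.
Qed.

Lemma commGamma_tr (u : 'rV[rat]_n) : (forall j, exists k : int, u 0 j = k%:~R) ->
  (forall j, j \in zero_cols -> u 0 j = 0) -> commGamma A (aff_tr u).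
Proof.
move=> uZ u0; apply: (zmod_closed_row (S := fun v => commGamma A (aff_tr v))) => //.
- split=> [|v w Cv Cw|v Cv]; first by rewrite aff_tr0; apply: comm_one.
  + by rewrite -aff_trD; apply: comm_mul.
  + by rewrite -aff_trN; apply: comm_inv.
- move=> j uj0; rewrite -transl_tr; apply: transl_comm.
  by apply/negP => /u0 uj; rewrite uj eqxx in uj0.
Qed.

Lemma card_nonzero_cols : #|~: zero_cols| = (n - z)%N.
Proof. by have := cardsC zero_cols; rewrite card_ord => /(canRL (addKn _)). Qed.

Definition zcol (k : 'I_z) : 'I_n := enum_val k.
Definition nzcol (k : 'I_(n - z)) : 'I_n := enum_val (cast_ord (esym card_nonzero_cols) k).

Lemma zcolP k : zcol k \in zero_cols.
Proof. exact: enum_valP. Qed.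

Lemma nzcolP k : nzcol k \notin zero_cols.
Proof. by have := enum_valP (cast_ord (esym card_nonzero_cols) k); rewrite inE. Qed.

Lemma zcol_inj : injective zcol.
Proof. exact: enum_val_inj. Qed.

Lemma nzcol_inj : injective nzcol.
Proof. by move=> k l /enum_val_inj /cast_ord_inj. Qed.

Lemma zcol_onto j : j \in zero_cols -> exists k, zcol k = j.
Proof. by move=> zj; exists (enum_rank_in zj j); rewrite /zcol enum_rankK_in. Qed.

Lemma nzcol_onto j : j \notin zero_cols -> exists k, nzcol k = j.
Proof.
rewrite -in_setC => nzj; exists (cast_ord card_nonzero_cols (enum_rank_in nzj j)).
by rewrite /nzcol cast_ordK enum_rankK_in.
Qed.

Definition abel_map g : 'rV['F_2]_(n - z) * 'rV[int]_z :=
  (\row_k parity g (nzcol k), \row_k coord2 g (zcol k)).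

Lemma abel_map_hom g h : Gamma A g -> Gamma A h ->
  abel_map (aff_mul g h) = abel_map g + abel_map h.
Proof.
move=> Gg Gh; have [Sg Sh] := (Gamma_bott_shape Gg, Gamma_bott_shape Gh).
congr pair; apply/rowP => k; rewrite !mxE; first exact: parity_mul Sg Sh.
by rewrite (coord2_mul _ Sg Sh) (sign_zero_col Gg (zcolP k)) mul1r addrC.
Qed.

Lemma abel_map_ker g : Gamma A g -> abel_map g = 0 -> commGamma A g.
Proof.
move=> Gg /pair_equal_spec [/rowP par0 /rowP coord0]; have Sg := Gamma_bott_shape Gg.
have {}coord0 j : j \in zero_cols -> coord2 g j = 0.
  by move=> /zcol_onto [k <-]; have := coord0 k; rewrite !mxE.
have {}par0 j : parity g j = 0.
  have [/coord0 c0|/nzcol_onto [k <-]] := boolP (j \in zero_cols); first by rewrite /parity c0.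
  by have := par0 k; rewrite !mxE.
have -> : g = aff_tr (\row_j g.2 j).
  by apply: aff_ext => j; rewrite !ffunE ?mxE // (sign_parity Sg) big1.
apply: commGamma_tr => j; rewrite mxE.
  have [y cy] := F2_intr_eq0 (par0 j); exists y.
  by have := coord2K Sg j; rewrite cy intrM => ?; lra.
by move=> /coord0 c0; have := coord2K Sg j; rewrite c0 => ?; lra.
Qed.

Lemma abel_map_gen_nz k : abel_map (bott_gen A (nzcol k)) = ('e_k, 0).
Proof.
congr pair; apply/rowP => l; rewrite !mxE; first by rewrite parity_gen (inj_eq nzcol_inj).
rewrite coord2_gen; case: eqP => // zl; have := zcolP l; by rewrite zl (negbTE (nzcolP k)).
Qed.

Lemma abel_map_gen_z k : abel_map (bott_gen A (zcol k)) = (0, 'e_k).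
Proof.
congr pair; apply/rowP => l; rewrite !mxE; last by rewrite coord2_gen (inj_eq zcol_inj).
rewrite parity_gen; case: eqP => // zl; have := nzcolP l; by rewrite zl zcolP.
Qed.

Lemma abel_map_onto y : exists2 g, Gamma A g & abel_map g = y.
Proof.
have closedS := hom_image_closed abel_map_hom.
have [_ SD _] := closedS; case: y => u v; rewrite -[u]addr0 -[v]add0r; apply: (SD (u, 0) (0, v)).
- apply: zmod_closed_row (zmod_closed_pairl closedS) _ _.
  + by move=> k; exists (Posz (u 0 k)); rewrite -pmulrn natr_Zp.
  + by move=> k _; exists (bott_gen A (nzcol k)); [apply: Gamma_gen | apply: abel_map_gen_nz].
- apply: zmod_closed_row (zmod_closed_pairr closedS) _ _.
  + by move=> k; exists (v 0 k); rewrite intz.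
  + by move=> k _; exists (bott_gen A (zcol k)); [apply: Gamma_gen | apply: abel_map_gen_z].
Qed.

Lemma homQ_coord_zcol k : homQ A (fun g => g.2 (zcol k)).
Proof. by move=> g h Gg _; rewrite ffunE (sign_zero_col Gg (zcolP k)) mul1r addrC. Qed.

Lemma homQ_indep_coord_zcol : homQ_indep A (fun k g => g.2 (zcol k)).
Proof.
move=> c c0 k; have := c0 _ (Gamma_gen A (zcol k)).
rewrite (bigD1 k) //= big1 ?addr0 => [|l /negbTE nlk]; last first.
  by rewrite ffunE (inj_eq zcol_inj) nlk mulr0.
by rewrite ffunE eqxx => ?; lra.
Qed.

Lemma homQ_eq0 f : homQ A f -> (forall k, f (bott_gen A (zcol k)) = 0) ->
  forall g, Gamma A g -> f g = 0.
Proof.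
move=> hom_f f0; apply: (hom_eq0 hom_f) => i.
have [/zcol_onto [k <-] // | nzi] := boolP (i \in zero_cols).
have := hom_comm hom_f (transl_comm nzi).
by rewrite -(bott_gen_sqr A) hom_f; [lra | apply: Gamma_gen ..].
Qed.

Lemma homQ_indep_le m (f : 'I_m -> aff n -> rat) :
  (forall k, homQ A (f k)) -> homQ_indep A f -> (m <= z)%N.
Proof.
move=> hom_f indep_f.
pose M := \matrix_(k < m, l < z) f k (bott_gen A (zcol l)).
suff /eqP <- : row_free M by exact: rank_leq_col.
apply/inj_row_free => c cM0; apply/rowP => k; rewrite mxE.
apply: (indep_f (fun k => c 0 k)); apply: homQ_eq0 => [g h Gg Gh | l].
  by rewrite -big_split; apply: eq_bigr => k' _; rewrite hom_f // mulrDr.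
move/rowP: cM0 => /(_ l); rewrite !mxE => cM0l; rewrite -[RHS]cM0l.
by apply: eq_bigr => k' _; rewrite mxE.
Qed.

Lemma betti1_zero_cols : betti1 A z.
Proof.
split; last exact: homQ_indep_le.
by exists (fun k g => g.2 (zcol k)); split; [exact: homQ_coord_zcol | exact: homQ_indep_coord_zcol].
Qed.

Lemma betti1_card b : betti1 A b -> b = z.
Proof.
move=> [[f [hom_f indep_f]] le_b]; apply/eqP.
by rewrite eqn_leq (homQ_indep_le hom_f indep_f) (le_b _ _ homQ_coord_zcol homQ_indep_coord_zcol).
Qed.

End ZeroColumns.

Theorem mainTheorem3 (n : nat) (A : 'M['F_2]_n) :
  is_bott A ->
  (exists b, betti1 A b) /\
  forall b : nat, betti1 A b ->
    (b <= n)%N /\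
    exists phi : aff n -> ('rV['F_2]_(n - b) * 'rV[int]_b)%type,
      (forall g h, Gamma A g -> Gamma A h -> phi (aff_mul g h) = phi g + phi h) /\
      (forall y, exists2 g, Gamma A g & phi g = y) /\
      (forall g, Gamma A g -> (phi g = 0 <-> commGamma A g)).
Proof.
move=> _; split=> [|b /betti1_card ->]; first by exists #|zero_cols A|; apply: betti1_zero_cols.
split; first by rewrite -[X in (_ <= X)%N](card_ord n) max_card.
exists (abel_map A); split; first exact: abel_map_hom.
split=> [|g Gg]; first exact: abel_map_onto.
split; first exact: abel_map_ker.
by move/hom_comm; apply; apply: abel_map_hom.
Qed.
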